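(* Let $V$ be a finite totally ordered set and let $w_1, w_2$ be derangements of $V$ each having exactly $k$ disjoint cycles. If $\theta(w_1) \le \theta(w_2)$ in the componentwise (cartesian product) order on $(\mathbb{Z}_+)^{|V|-k}$, then $f(w_1) \le f(w_2)$ and $r(w_1) \le r(w_2)$.
   Context: A derangement of $V$ is a fixed-point-free permutation of $V$. For a permutation $w$ of $V$ and $t \in V$, define $\rho_w(t) = \{t, w(t), \ldots, w^{k-1}(t)\}$, where $k$ is the smallest positive integer with $w^k(t) \le t$, and define $\lambda_w(t) = w^{-\ell}(t)$, where $\ell$ is the smallest positive integer with $w^{-\ell}(t) \le t$. Let $U(w)$ be the set of elements of $V$ that are not minimal in their $w$-cycle (so $|U(w)| = |V| - k$ if $w$ has $k$ cycles). $\theta(w) \in (\mathbb{Z}_+)^{|V|-k}$ is the tuple of the numbers $|\rho_w(t)|$ for $t \in U(w)$ (with multiplicity), listed in non-decreasing order. For a simple graph $G$ with vertex set $V$, the derangement set $\mathcal{D}(G)$ is the set of permutations $w$ of $V$ such that for every vertex $t$, $\lambda_w(t)$ is adjacent in $G$ to some vertex of $\rho_w(t)$. The frequency $f(w)$ is the number of simple graphs $G$ on vertex set $V$ with $w \in \mathcal{D}(G)$, and the rate is $r(w) = f(w)/2^{\binom{|V|}{2}}$. *)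

From HB Require Import structures.
From mathcomp Require Import all_boot all_order all_algebra all_fingroup.
Set Implicit Arguments. Unset Strict Implicit. Unset Printing Implicit Defensive.
Import Order.TTheory GRing.Theory Num.Theory.

(* V is modelled as a finite totally ordered type T : finOrderType d. *)
Section Defs.
Variables (d : Order.disp_t) (T : finOrderType d).

Definition derangement (w : {perm T}) : Prop := forall x : T, w x != x.

(* k(t) = smallest positive k with w^k(t) <= t (exists, as w^order(t) t = t,
   and the cycle length is at most #|T|). *)
Definition rho_len (w : {perm T}) (t : T) : nat :=
  (find (fun k => ((w ^+ k)%g t <= t)%O) (iota 1 #|T|)).+1.

Definition rho (w : {perm T}) (t : T) : {set T} :=
  [set (w ^+ (val i))%g t | i : 'I_(rho_len w t)].

Definition lambda_len (w : {perm T}) (t : T) : nat :=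
  (find (fun l => (((w^-1) ^+ l)%g t <= t)%O) (iota 1 #|T|)).+1.

Definition lambda (w : {perm T}) (t : T) : T :=
  (((w^-1) ^+ lambda_len w t)%g t).

Definition simple_graph (E : {set {set T}}) : bool :=
  [forall e in E, #|e| == 2].

Definition adj (E : {set {set T}}) (u v : T) : bool :=
  (u != v) && ([set u; v] \in E).

Definition inD (E : {set {set T}}) (w : {perm T}) : bool :=
  [forall t : T, [exists u in rho w t, adj E (lambda w t) u]].

Definition freq (w : {perm T}) : nat :=
  #|[set E : {set {set T}} | simple_graph E && inD E w]|.

Definition rate (w : {perm T}) : rat :=
  (freq w)%:R / (2 ^ 'C(#|T|, 2))%:R.

Definition Uset (w : {perm T}) : {set T} :=
  [set t : T | [exists x in porbit w t, (x < t)%O]].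

Definition theta (w : {perm T}) : seq nat :=
  sort leq [seq #|rho w t| | t <- enum (Uset w)].

End Defs.

Definition tuple_le (s1 s2 : seq nat) : bool := all2 leq s1 s2.

From mathcomp Require Import all_boot all_order all_algebra all_fingroup ring.
Set Implicit Arguments. Unset Strict Implicit. Unset Printing Implicit Defensive.
Import Order.TTheory GRing.Theory Num.Theory.

(* For t in U(w), the condition at t says that the edge set meets the
   |rho_w(t)| pairs {lambda_w(t), u}, u in rho_w(t). These edge sets are pairwise
   disjoint, because t can be recovered from such a pair as the least point of the
   w-walk from lambda_w(t) to u; and for the minimum t of a cycle the condition is
   implied by the one at w(t), which lies in U(w). Hence
   f(w) = 2^(C(|V|,2) - sum theta(w)) * prod_{x in theta(w)} (2^x - 1), and
   x |-> 1 - 2^-x is increasing. *)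

Section HittingSets.
Variables (I : eqType) (X : finType) (S : I -> {set X}).
Implicit Types (t : I) (ts : seq I) (B : {set X}).

Definition hitting_sets (ts : seq I) (B : {set X}) : {set {set X}} :=
  [set E : {set X} | (E \subset B) && all (fun t => E :&: S t != set0) ts].

Lemma setU_split (A F G : {set X}) : F \subset A -> [disjoint G & A] ->
  (F :|: G) :&: A = F /\ (F :|: G) :\: A = G.
Proof.
move=> FA GA; rewrite setIUl setDUl (setIidPl FA) (setDidPl GA).
by move: FA GA; rewrite -setD_eq0 -setI_eq0 => /eqP-> /eqP->; rewrite setU0 set0U.
Qed.

Lemma hitting_sets_nil B : hitting_sets [::] B = powerset B.
Proof. by apply/setP => E; rewrite !inE andbT. Qed.

Lemma hitting_sets_cons t ts B : S t \subset B ->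
  (forall t', t' \in ts -> S t' \subset B :\: S t) ->
  hitting_sets (t :: ts) B =
  [set x.1 :|: x.2 | x in setX (powerset (S t) :\ set0) (hitting_sets ts (B :\: S t))].
Proof.
move=> StB sub_ts; apply/setP => E; apply/idP/imsetP.
  rewrite inE /= => /and3P[EB EtS Eall].
  exists (E :&: S t, E :\: S t); last by rewrite /= setID.
  rewrite !inE EtS subsetIr setSD //=; apply/allP => t' ts_t'.
  case/set0Pn: (allP Eall t' ts_t') => x /setIP[xE xS].
  have /setDP[_ xSt] := subsetP (sub_ts t' ts_t') x xS.
  by apply/set0Pn; exists x; rewrite !inE xE xS xSt.
case=> -[F G]; rewrite !inE /= => /andP[/andP[F0 FS] /andP[GB Gall]] ->.
rewrite subUset (subset_trans FS StB) (subset_trans GB (subsetDl _ _)) /=.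
apply/andP; split.
  by case/set0Pn: F0 => x xF; apply/set0Pn; exists x; rewrite !inE xF (subsetP FS).
apply/allP => t' ts_t'; case/set0Pn: (allP Gall t' ts_t') => x /setIP[xG xS].
by apply/set0Pn; exists x; rewrite !inE xG xS orbT.
Qed.

Lemma card_hitting_sets_cons t ts B : S t \subset B ->
  (forall t', t' \in ts -> S t' \subset B :\: S t) ->
  #|hitting_sets (t :: ts) B| = ((2 ^ #|S t| - 1) * #|hitting_sets ts (B :\: S t)|)%N.
Proof.
move=> StB sub_ts; rewrite hitting_sets_cons // card_in_imset; last first.
  move=> [F G] [F' G']; rewrite !inE /= => /andP[/andP[_ FS] /andP[GB _]].
  case/andP=> /andP[_ FS'] /andP[GB' _] /= eqFG.
  move: GB GB'; rewrite !subsetD => /andP[_ GSt] /andP[_ G'St].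
  have [FE GE] := setU_split FS GSt; have [F'E G'E] := setU_split FS' G'St.
  by congr pair; [rewrite -FE -F'E eqFG | rewrite -GE -G'E eqFG].
rewrite cardsX; congr (_ * _)%N; have := cardsD1 set0 (powerset (S t)).
by rewrite powersetE sub0set card_powerset add1n => ->; rewrite subn1.
Qed.

Lemma card_hitting_sets ts B : uniq ts -> (forall t, t \in ts -> S t \subset B) ->
  {in ts &, forall t t', t != t' -> [disjoint S t & S t']} ->
  (#|hitting_sets ts B| * 2 ^ (\sum_(t <- ts) #|S t|) =
   2 ^ #|B| * \prod_(t <- ts) (2 ^ #|S t| - 1))%N.
Proof.
elim: ts B => [|t ts IH] B.
  by rewrite hitting_sets_nil card_powerset !big_nil expn0 !muln1.
rewrite cons_uniq => /andP[t_ts ts_uniq] sub_tts dis_tts.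
have sub_ts t' : t' \in ts -> S t' \subset B :\: S t.
  move=> ts_t'; rewrite subsetD sub_tts ?inE ?ts_t' ?orbT //=.
  by rewrite dis_tts ?inE ?ts_t' ?eqxx ?orbT //; apply: contraNneq t_ts => <-.
have StB : S t \subset B by rewrite sub_tts ?inE ?eqxx.
have cardB : #|B| = (#|B :\: S t| + #|S t|)%N.
  by rewrite cardsD (setIidPr StB) subnK // subset_leq_card.
have dis_ts : {in ts &, forall t1 t2, t1 != t2 -> [disjoint S t1 & S t2]}.
  by move=> t1 t2 ts_t1 ts_t2; apply: dis_tts; rewrite inE ?ts_t1 ?ts_t2 orbT.
have := IH (B :\: S t) ts_uniq sub_ts dis_ts.
rewrite card_hitting_sets_cons // !big_cons cardB !expnD.
set h := #|_|; set p := \prod_(_ <- _) _; set s := \sum_(_ <- _) _.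
move=> IHB; rewrite [LHS](_ : _ = (2 ^ #|S t| - 1) * 2 ^ #|S t| * (h * 2 ^ s))%N.
  by rewrite IHB; ring.
by ring.
Qed.
End HittingSets.

(* prod (1 - 2^-x) is monotone in each x, with denominators cleared. *)
Lemma leq_prod_exp2_subn1 (a b : seq nat) : all2 leq a b ->
  (\prod_(x <- a) (2 ^ x - 1) * 2 ^ sumn b <= \prod_(x <- b) (2 ^ x - 1) * 2 ^ sumn a)%N.
Proof.
elim: a b => [|x a IH] [|y b] //= /andP[le_xy le_ab].
have le_head : ((2 ^ x - 1) * 2 ^ y <= (2 ^ y - 1) * 2 ^ x)%N.
  by rewrite !mulnBl !mul1n -!expnD addnC leq_sub2l // leq_pexp2l.
rewrite !big_cons !expnD mulnACA [X in (_ <= X)%N]mulnACA.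
exact: leq_mul le_head (IH b le_ab).
Qed.

Local Open Scope order_scope.

Section Derangements.
Variables (d : Order.disp_t) (T : finOrderType d).
Implicit Types (s w : {perm T}) (a t u : T).

Lemma has_return s t : has (fun k => (s ^+ k)%g t <= t) (iota 1 #|T|).
Proof.
apply/hasP; exists #|porbit s t|; last by rewrite permX iter_porbit.
by rewrite mem_iota add1n ltnS max_card andbT lt0n card_porbit_neq0.
Qed.

Lemma rho_len_le_card s t : (rho_len s t <= #|T|)%N.
Proof. by have := has_return s t; rewrite has_find size_iota. Qed.

Lemma perm_rho_len_le s t : (s ^+ rho_len s t)%g t <= t.
Proof.
have := nth_find 0 (has_return s t).
by rewrite nth_iota ?add1n //; exact: rho_len_le_card.
Qed.

Lemma lt_perm_before_rho_len s t k :
  (0 < k < rho_len s t)%N -> t < (s ^+ k)%g t.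
Proof.
case: k => // k /= lt_k; rewrite ltnS in lt_k.
have := before_find 0 lt_k; rewrite nth_iota ?add1n; last first.
  exact: ltn_trans lt_k (rho_len_le_card s t).
by move/negbT; rewrite -ltNge.
Qed.

Lemma rho_len_min s t k : (0 < k)%N -> (s ^+ k)%g t <= t -> (rho_len s t <= k)%N.
Proof.
move=> k_gt0; apply: contraTT; rewrite -ltnNge -ltNge => lt_k.
by rewrite lt_perm_before_rho_len ?k_gt0.
Qed.

Lemma porbit_ge_of_return s u c q :
  (0 < q)%N -> (s ^+ q)%g u = u ->
  (forall i, (0 < i <= q)%N -> c <= (s ^+ i)%g u) ->
  forall y, y \in porbit s u -> c <= y.
Proof.
move=> q_gt0 squ lb y /porbitP[j ->].
have sqn n : (s ^+ (n * q))%g u = u by rewrite mulnC expgM permX iter_fix.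
rewrite (divn_eq j q) expgD permM sqn.
have [->|r_gt0] := posnP (j %% q).
  by rewrite expg0 perm1 -{1}squ lb // q_gt0 leqnn.
by rewrite lb // r_gt0 ltnW // ltn_pmod.
Qed.

Lemma UsetV w : Uset w^-1 = Uset w.
Proof. by apply/setP => t; rewrite !inE; apply: eq_existsb => x; rewrite porbitV. Qed.

Lemma notin_Uset_min w t x : t \notin Uset w -> x \in porbit w t -> t <= x.
Proof. by rewrite inE => /existsPn/(_ x); rewrite leNgt => /nandP[/negP|]. Qed.

Lemma Uset_perm_rho_len_lt s t : t \in Uset s -> (s ^+ rho_len s t)%g t < t.
Proof.
rewrite lt_neqAle perm_rho_len_le andbT inE => /existsP[x /andP[tx xt]].
apply: contraTneq xt => ret; rewrite -leNgt.
apply: (porbit_ge_of_return _ ret) tx => // i /andP[i_gt0].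
rewrite leq_eqVlt => /orP[/eqP ->|lt_i]; first by rewrite ret.
by rewrite ltW // lt_perm_before_rho_len ?i_gt0.
Qed.

Lemma le_perm_before_rho_len w t j : (j < rho_len w t)%N -> t <= (w ^+ j)%g t.
Proof.
case: j => [|j] lt_j; first by rewrite expg0 perm1.
by rewrite ltW // lt_perm_before_rho_len.
Qed.

Lemma rhoP w t u :
  reflect (exists2 i, (i < rho_len w t)%N & u = (w ^+ i)%g t) (u \in rho w t).
Proof.
apply: (iffP imsetP) => [[i _ ->]|[i lt_i ->]]; first by exists i.
by exists (Ordinal lt_i).
Qed.

Lemma rho_ge w t u : u \in rho w t -> t <= u.
Proof. by case/rhoP=> i /le_perm_before_rho_len le_t ->. Qed.

Lemma perm_lambda w t : (w ^+ lambda_len w t)%g (lambda w t) = t.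
Proof. by rewrite /lambda expgVn permKV. Qed.

Lemma lambda_lt w t : t \in Uset w -> lambda w t < t.
Proof. by rewrite -UsetV; apply: Uset_perm_rho_len_lt. Qed.

Lemma lt_perm_before_lambda_len w t p :
  (0 < p < lambda_len w t)%N -> t < (w ^+ p)%g (lambda w t).
Proof.
case/andP=> p_gt0 lt_p; rewrite /lambda -(subnK (ltnW lt_p)) expgD permM.
rewrite expgVn permKV lt_perm_before_rho_len // subn_gt0 lt_p.
by rewrite ltn_subrL p_gt0.
Qed.

Lemma perm_return w a P Q :
  (w ^+ P)%g a = (w ^+ Q)%g a -> (P <= Q)%N -> (w ^+ (Q - P))%g a = a.
Proof.
move=> eqPQ lePQ; apply: (@perm_inj _ (w ^+ P)%g).
by rewrite -permM -expgD subnK.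
Qed.

Definition walk_min w a u t : Prop :=
  exists P, [/\ (w ^+ P)%g a = u,
    exists2 m, (0 < m <= P)%N & (w ^+ m)%g a = t &
    forall p, (0 < p <= P)%N -> t <= (w ^+ p)%g a].

Lemma rho_walk_min w t u :
  u \in rho w t -> walk_min w (lambda w t) u t.
Proof.
case/rhoP=> i lt_i ->; set m := lambda_len w t.
exists (m + i)%N; split.
- by rewrite expgD permM perm_lambda.
- by exists m; rewrite ?perm_lambda // leq_addr andbT.
move=> p /andP[p_gt0 le_p]; have [lt_pm|le_mp] := ltnP p m.
  by rewrite ltW // lt_perm_before_lambda_len ?p_gt0.
rewrite -(subnKC le_mp) expgD permM perm_lambda le_perm_before_rho_len //.
by apply: leq_ltn_trans lt_i; rewrite leq_subLR.
Qed.

Lemma walk_min_unique w a u t t' :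
  a < t -> a < t' -> walk_min w a u t -> walk_min w a u t' -> t = t'.
Proof.
have no_return c Q R : a < c -> (w ^+ Q)%g a = u -> (w ^+ R)%g a = u ->
    (forall p, (0 < p <= R)%N -> c <= (w ^+ p)%g a) -> ~ (Q < R)%N.
  move=> lt_ac wQ wR lb lt_QR.
  have ret : (w ^+ (R - Q))%g a = a by apply: perm_return; [rewrite wQ wR | exact: ltnW].
  by have := lb (R - Q)%N; rewrite ret subn_gt0 lt_QR leq_subr leNgt lt_ac => /(_ isT).
move=> lt_at lt_at' [P [wP [m m_in wm] lbP]] [P' [wP' [m' m'_in wm'] lbP']].
have [lt_PP'|lt_P'P|eqPP'] := ltngtP P P'.
- by case: (no_return t' P P' lt_at' wP wP' lbP').
- by case: (no_return t P' P lt_at wP' wP lbP).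
subst P'; apply: le_anti; apply/andP; split.
  by rewrite -wm'; apply: lbP.
by rewrite -wm; apply: lbP'.
Qed.

Section CycleMinimum.
Variables (w : {perm T}) (t : T).
Hypotheses (w_der : derangement w) (t_min : t \notin Uset w).

Lemma lambda_Uset_min : lambda w t = t.
Proof.
apply: le_anti; rewrite perm_rho_len_le (notin_Uset_min t_min) //.
by rewrite -porbitV mem_porbit.
Qed.

Lemma lt_perm_Uset_min : t < w t.
Proof.
rewrite lt_neqAle eq_sym w_der (notin_Uset_min t_min) //.
by have := mem_porbit w 1 t; rewrite expg1.
Qed.

Lemma perm_in_Uset : w t \in Uset w.
Proof.
rewrite inE; apply/existsP; exists t; rewrite lt_perm_Uset_min andbT.
by rewrite porbit_sym; have := mem_porbit w 1 t; rewrite expg1.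
Qed.

Lemma lambda_perm_Uset_min : lambda w (w t) = t.
Proof.
have lambda1 : lambda_len w (w t) = 1%N.
  apply/eqP; rewrite eqn_leq rho_len_min //.
  by rewrite expg1 permK ltW ?lt_perm_Uset_min.
by rewrite /lambda lambda1 expg1 permK.
Qed.

Lemma rho_len_perm_lt : (rho_len w (w t) < rho_len w t)%N.
Proof.
have ret : (w ^+ (rho_len w t).-1)%g (w t) <= w t.
  rewrite -permM -expgS.
  exact: le_trans (perm_rho_len_le w t) (ltW lt_perm_Uset_min).
have k_gt0 : (0 < (rho_len w t).-1)%N.
  rewrite lt0n; apply/negP => /eqP k1; have := perm_rho_len_le w t.
  by rewrite -[rho_len w t]/((rho_len w t).-1.+1) k1 expg1 leNgt lt_perm_Uset_min.
exact: rho_len_min k_gt0 ret.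
Qed.

Lemma rho_perm_sub : rho w (w t) \subset rho w t.
Proof.
apply/subsetP => u /rhoP[i lt_i ->]; apply/rhoP; exists i.+1.
  exact: leq_ltn_trans lt_i rho_len_perm_lt.
by rewrite expgS permM.
Qed.

End CycleMinimum.

Lemma set2_lt_inj a u a' u' :
  a < u -> a' < u' -> [set a; u] = [set a'; u'] -> a = a' /\ u = u'.
Proof.
move=> lt_au lt_au' eq2.
have eq_a : a = a'.
  have : a \in [set a'; u'] by rewrite -eq2 set21.
  have : a' \in [set a; u] by rewrite eq2 set21.
  rewrite !in_set2 => /orP[/eqP -> //|/eqP a'u] /orP[/eqP -> //|/eqP au'].
  by rewrite a'u -au' ltNge (ltW lt_au) in lt_au'.
split=> //; have : u \in [set a'; u'] by rewrite -eq2 set22.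
by rewrite in_set2 -eq_a (gt_eqF lt_au) => /eqP.
Qed.

Definition rho_edges w t : {set {set T}} := [set [set lambda w t; u] | u in rho w t].

Lemma lambda_lt_rho w t u : t \in Uset w -> u \in rho w t -> lambda w t < u.
Proof. by move=> tU /rho_ge; apply: lt_le_trans (lambda_lt tU). Qed.

Lemma card_rho_edges w t : t \in Uset w -> #|rho_edges w t| = #|rho w t|.
Proof.
move=> tU; apply: card_in_imset => u u' u_rho u'_rho eq2.
by have [] := set2_lt_inj (lambda_lt_rho tU u_rho) (lambda_lt_rho tU u'_rho) eq2.
Qed.

Lemma rho_edges_card2 w t : t \in Uset w ->
  rho_edges w t \subset [set e : {set T} | #|e| == 2].
Proof.
move=> tU; apply/subsetP => _ /imsetP[u u_rho ->].
by rewrite inE cards2 (lt_eqF (lambda_lt_rho tU u_rho)).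
Qed.

Lemma rho_edges_disjoint w t t' : t \in Uset w -> t' \in Uset w -> t != t' ->
  [disjoint rho_edges w t & rho_edges w t'].
Proof.
move=> tU t'U; apply: contraNT; rewrite -setI_eq0 => /set0Pn[e /setIP[]].
case/imsetP=> u u_rho -> /imsetP[u' u'_rho /set2_lt_inj[]]; try exact: lambda_lt_rho.
move=> eq_lambda eq_u; apply/eqP/(walk_min_unique (lambda_lt tU) _ (rho_walk_min u_rho)).
  by rewrite eq_lambda lambda_lt.
by rewrite eq_lambda eq_u; apply: rho_walk_min.
Qed.

Lemma adj_rho_edges w E t : t \in Uset w ->
  [exists u in rho w t, adj E (lambda w t) u] = (E :&: rho_edges w t != set0).
Proof.
move=> tU; apply/existsP/set0Pn => [[u /andP[u_rho /andP[_ uE]]]|[e]].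
  by exists [set lambda w t; u]; rewrite inE uE; apply: imset_f.
case/setIP=> eE /imsetP[u u_rho eu]; exists u.
by rewrite u_rho /adj (lt_eqF (lambda_lt_rho tU u_rho)) -eu eE.
Qed.

Lemma inD_hits w E : derangement w ->
  inD E w = all (fun t => E :&: rho_edges w t != set0) (enum (Uset w)).
Proof.
move=> w_der; apply/forallP/allP => [inDw t|hits t].
  by rewrite mem_enum => tU; rewrite -adj_rho_edges.
have [tU|t_min] := boolP (t \in Uset w); first by rewrite adj_rho_edges ?hits ?mem_enum.
have := hits (w t); rewrite mem_enum perm_in_Uset // -adj_rho_edges ?perm_in_Uset //.
case/(_ isT)/existsP=> u /andP[u_rho adj_u]; apply/existsP; exists u.
rewrite (subsetP (rho_perm_sub w_der t_min)) // lambda_Uset_min //.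
by rewrite -(lambda_perm_Uset_min w_der t_min).
Qed.

Lemma freq_mul_exp2_sum_theta w : derangement w ->
  (freq w * 2 ^ sumn (theta w) = 2 ^ 'C(#|T|, 2) * \prod_(x <- theta w) (2 ^ x - 1))%N.
Proof.
move=> w_der; set pairs := [set e : {set T} | #|e| == 2].
have -> : freq w = #|hitting_sets (rho_edges w) (enum (Uset w)) pairs|.
  apply: eq_card => E; rewrite !inE inD_hits //; congr andb.
  by apply/forall_inP/subsetP => sub_E e /sub_E; rewrite ?inE.
have theta_perm : perm_eq (theta w) [seq #|rho w t| | t <- enum (Uset w)].
  by rewrite perm_sort.
have sum_theta : sumn (theta w) = \sum_(t <- enum (Uset w)) #|rho_edges w t|.
  rewrite (perm_sumn theta_perm) sumnE big_map; apply: eq_big_seq => t.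
  by rewrite mem_enum => tU; rewrite card_rho_edges.
have prod_theta : \prod_(x <- theta w) (2 ^ x - 1) =
    \prod_(t <- enum (Uset w)) (2 ^ #|rho_edges w t| - 1).
  rewrite (perm_big _ theta_perm) big_map; apply: eq_big_seq => t.
  by rewrite mem_enum => tU; rewrite card_rho_edges.
rewrite sum_theta prod_theta card_hitting_sets ?enum_uniq ?card_draws //.
  by move=> t; rewrite mem_enum => /rho_edges_card2.
by move=> t t'; rewrite !mem_enum; apply: rho_edges_disjoint.
Qed.

Lemma leq_freq_theta w1 w2 : derangement w1 -> derangement w2 ->
  tuple_le (theta w1) (theta w2) -> (freq w1 <= freq w2)%N.
Proof.
move=> der1 der2 le_theta.
rewrite -(@leq_pmul2r (2 ^ sumn (theta w1) * 2 ^ sumn (theta w2))) ?muln_gt0 ?expn_gt0 //.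
rewrite mulnA freq_mul_exp2_sum_theta // [freq w2 * _]mulnCA.
rewrite freq_mul_exp2_sum_theta // -mulnA [X in (_ <= X)%N]mulnCA.
by rewrite leq_pmul2l ?expn_gt0 // [X in (_ <= X)%N]mulnC leq_prod_exp2_subn1.
Qed.

End Derangements.

Theorem corollary3p8 (d : Order.disp_t) (T : finOrderType d) (k : nat)
  (w1 w2 : {perm T}) :
  derangement w1 -> derangement w2 ->
  #|porbits w1| = k -> #|porbits w2| = k ->
  tuple_le (theta w1) (theta w2) ->
  (freq w1 <= freq w2)%N /\ (rate w1 <= rate w2)%R.
Proof.
(* The cycle count k only fixes the common length |T| - k of the two theta
   tuples, which [tuple_le] already forces. *)
move=> der1 der2 _ _ le_theta; have le_freq := leq_freq_theta der1 der2 le_theta.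
split=> //; rewrite /rate ler_wpM2r ?invr_ge0 ?ler0n //.
by rewrite ler_nat.
Qed.
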